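(* Let $f,g_1,\dots,g_m$, $\phi$, $\psi$ be as in the context, and consider the HMCP: find $\hat x=\mathrm{col}(\bar x,\tau)\ge0$, $\hat s=\mathrm{col}(\bar s,\kappa)\ge 0$ with $\hat s=\psi(\hat x)$ and $\hat s\odot\hat x=0$. Then the HMCP is always asymptotically feasible. Furthermore, every asymptotically feasible solution of the HMCP is an asymptotically complementary solution.
   Context: $f,g_1,\dots,g_m:\mathbb{R}^n\to\mathbb{R}$ are twice continuously differentiable convex functions on $\mathbb{R}^n_+$, $g=\mathrm{col}(g_1,\dots,g_m)$, $\bar n=n+m$, $\phi:\mathbb{R}^{\bar n}_+\to\mathbb{R}^{\bar n}$, $\phi(x,y)=\mathrm{col}\big(\nabla f(x)+\sum_{i=1}^m y_i\nabla g_i(x),\ -g(x)\big)$, and $\psi:\mathbb{R}^{\bar n+1}_{++}\to\mathbb{R}^{\bar n+1}$, $\psi(\bar x,\tau)=\mathrm{col}\big(\tau\phi(\bar x/\tau),\ -\bar x^\top\phi(\bar x/\tau)\big)$; $\odot$ is the componentwise product. The HMCP is asymptotically feasible if there exist positive bounded $(\bar x^t,\tau^t,\bar s^t,\kappa^t)>0$, $t>0$, such that $\mathrm{col}(\bar s^t,\kappa^t)-\psi(\bar x^t,\tau^t)\to 0$ as $t\to\infty$; such a family is an asymptotically feasible solution. An asymptotically feasible solution with $(\bar x^t)^\top\bar s^t+\tau^t\kappa^t=0$ is called an asymptotically complementary solution. *)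

From HB Require Import structures.
From mathcomp Require Import all_boot all_order all_algebra.
From mathcomp Require Import all_classical all_reals all_analysis.
Set Implicit Arguments. Unset Strict Implicit. Unset Printing Implicit Defensive.
Import Order.TTheory GRing.Theory Num.Theory.
Import numFieldNormedType.Exports.
Local Open Scope ring_scope.
Local Open Scope classical_set_scope.

Definition partial {R : realType} {n : nat} (h : 'rV[R]_n -> R) (j : 'I_n)
  : 'rV[R]_n -> R := fun x => 'D_(delta_mx 0 j) h x.

Definition grad {R : realType} {n : nat} (h : 'rV[R]_n -> R) (x : 'rV[R]_n)
  : 'rV[R]_n := \row_j partial h j x.

Definition C2 {R : realType} {n : nat} (h : 'rV[R]_n -> R) : Prop :=
  (forall x, differentiable h x) /\
  (forall j x, differentiable (partial h j) x) /\
  (forall j k, continuous (partial (partial h j) k)).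

Definition convex_on_orthant {R : realType} {n : nat} (h : 'rV[R]_n -> R) : Prop :=
  forall (x y : 'rV[R]_n) (l : R),
    (forall j, 0 <= x 0 j) -> (forall j, 0 <= y 0 j) -> 0 <= l <= 1 ->
    h (l *: x + (1 - l) *: y) <= l * h x + (1 - l) * h y.

Definition dotv {R : realType} {k : nat} (u v : 'rV[R]_k) : R :=
  \sum_(j < k) u 0 j * v 0 j.

(* phi(x,y) = col(grad f x + sum_i y_i grad g_i x, - g(x)), with the variable
   xb = col(x,y) in R^(n+m) *)
Definition phi {R : realType} {n m : nat} (f : 'rV[R]_n -> R)
  (g : 'I_m -> 'rV[R]_n -> R) (xb : 'rV[R]_(n + m)) : 'rV[R]_(n + m) :=
  let x := lsubmx xb in let y := rsubmx xb in
  row_mx (grad f x + \sum_(i < m) y 0 i *: grad (g i) x)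
         (- \row_i g i x).

(* psi(xb, tau) = col(tau phi(xb/tau), - xb^T phi(xb/tau)), as a pair *)
Definition psi {R : realType} {n m : nat} (f : 'rV[R]_n -> R)
  (g : 'I_m -> 'rV[R]_n -> R) (xb : 'rV[R]_(n + m)) (tau : R)
  : 'rV[R]_(n + m) * R :=
  (tau *: phi f g (tau^-1 *: xb), - dotv xb (phi f g (tau^-1 *: xb))).

Definition asympt_feasible {R : realType} {n m : nat} (f : 'rV[R]_n -> R)
  (g : 'I_m -> 'rV[R]_n -> R)
  (xb : R -> 'rV[R]_(n + m)) (tau : R -> R)
  (sb : R -> 'rV[R]_(n + m)) (kappa : R -> R) : Prop :=
  (forall t, 0 < t ->
     (forall j, 0 < xb t 0 j) /\ 0 < tau t /\ (forall j, 0 < sb t 0 j) /\ 0 < kappa t) /\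
  (exists M : R, forall t, 0 < t ->
     (forall j, `|xb t 0 j| <= M) /\ `|tau t| <= M /\
     (forall j, `|sb t 0 j| <= M) /\ `|kappa t| <= M) /\
  (fun t => sb t - (psi f g (xb t) (tau t)).1) @ +oo --> (0 : 'rV[R]_(n + m)) /\
  (fun t => kappa t - (psi f g (xb t) (tau t)).2) @ +oo --> (0 : R).

Definition asympt_complementary {R : realType} {n m : nat} (f : 'rV[R]_n -> R)
  (g : 'I_m -> 'rV[R]_n -> R)
  (xb : R -> 'rV[R]_(n + m)) (tau : R -> R)
  (sb : R -> 'rV[R]_(n + m)) (kappa : R -> R) : Prop :=
  asympt_feasible f g xb tau sb kappa /\
  (fun t => dotv (xb t) (sb t) + tau t * kappa t) @ +oo --> (0 : R).

From HB Require Import structures.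
From mathcomp Require Import all_boot all_order all_algebra.
From mathcomp Require Import all_classical all_reals all_analysis.
Import Order.TTheory GRing.Theory Num.Theory.
Import numFieldNormedType.Exports.
Set Implicit Arguments. Unset Strict Implicit. Unset Printing Implicit Defensive.
Local Open Scope ring_scope.
Local Open Scope classical_set_scope.

(* The map psi is skew, [xb . psi_1(xb, tau) + tau psi_2(xb, tau) = 0], and
   positively homogeneous of degree one, whatever f and g are.  By skewness the
   complementarity gap of (xb, tau, sb, kappa) is the pairing of (xb, tau) with
   the residual (sb, kappa) - psi(xb, tau), so it vanishes in the limit as soon
   as (xb, tau) stays bounded and the residual tends to 0.  By homogeneity,
   shrinking a fixed positive point by a factor tending to 0 shrinks its
   residual too, which gives an asymptotically feasible family. *)

Section dotv_algebra.
Variables (R : realType) (k : nat).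
Implicit Types (u v w : 'rV[R]_k) (a : R).

Lemma dotvZl a u v : dotv (a *: u) v = a * dotv u v.
Proof. by rewrite /dotv mulr_sumr; apply: eq_bigr => j _; rewrite mxE mulrA. Qed.

Lemma dotvZr a u v : dotv u (a *: v) = a * dotv u v.
Proof.
rewrite /dotv mulr_sumr; apply: eq_bigr => j _.
by rewrite mxE mulrCA.
Qed.

Lemma dotvBr u v w : dotv u (v - w) = dotv u v - dotv u w.
Proof.
rewrite /dotv -sumrB; apply: eq_bigr => j _.
by rewrite !mxE mulrBr.
Qed.

End dotv_algebra.

Section vanishing_products.
Context {R : realType} {T : Type} {F : set_system T} {FF : ProperFilter F}.

Lemma bounded_mulr_cvg0 (u v : T -> R) M :
  (\forall t \near F, `|u t| <= M) -> v @ F --> (0 : R) ->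
  u t * v t @[t --> F] --> (0 : R).
Proof.
move=> u_bnd v0; apply/norm_cvg0P.
apply: (@squeeze_cvgr _ _ _ _ (fun=> 0) (fun t => M * `|v t|)).
- by near=> t; rewrite /= normr_ge0 normrM ler_wpM2r //; near: t.
- exact: cvg_cst.
- rewrite -(mulr0 M); apply: cvgM; [exact: cvg_cst | exact/norm_cvg0P].
Unshelve. all: end_near. Qed.

Lemma dotv_bounded_cvg0 k (u v : T -> 'rV[R]_k) M :
  (\forall t \near F, forall j, `|u t 0 j| <= M) -> v @ F --> (0 : 'rV[R]_k) ->
  dotv (u t) (v t) @[t --> F] --> (0 : R).
Proof.
move=> u_bnd v0; have <- : \sum_(j < k) (0 : R) = 0 by rewrite big1.
apply: cvg_big => [|j _]; first exact: add_continuous.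
apply: (bounded_mulr_cvg0 (M := M)); first by apply: filterS u_bnd => t; apply.
by have := cvg_comp _ _ v0 (@coord_continuous R 1 k 0 j 0); rewrite mxE.
Qed.

End vanishing_products.

Lemma inv1Dnorm_cvg0 (R : realType) : (1 + `|t|)^-1 @[t --> +oo] --> (0 : R).
Proof.
apply/gtr0_cvgV0; first by apply: nearW => t; rewrite ltr_pwDl.
apply/cvgryPge => A; near=> t.
apply: (le_trans _ (ler_wpDl ler01 (ler_norm t))).
by near: t; apply: nbhs_pinfty_ge; exact: num_real.
Unshelve. all: end_near. Qed.

Section hmcp.
Variables (R : realType) (n m : nat).
Variables (f : 'rV[R]_n -> R) (g : 'I_m -> 'rV[R]_n -> R).

Lemma psi_skew xb tau :
  dotv xb (psi f g xb tau).1 + tau * (psi f g xb tau).2 = 0.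
Proof. by rewrite /psi /= dotvZr mulrN subrr. Qed.

Lemma psiZ a xb tau : a != 0 ->
  psi f g (a *: xb) (a * tau) =
  (a *: (psi f g xb tau).1, a * (psi f g xb tau).2).
Proof.
move=> a_neq0; rewrite /psi /= invfM.
have -> : (a^-1 * tau^-1) *: (a *: xb) = tau^-1 *: xb.
  by rewrite scalerA mulrAC mulVf // mul1r.
by rewrite scalerA dotvZl mulrN.
Qed.

Lemma complementarity_gap_residual xb tau sb kappa :
  dotv xb sb + tau * kappa =
  dotv xb (sb - (psi f g xb tau).1) + tau * (kappa - (psi f g xb tau).2).
Proof. by rewrite dotvBr mulrBr addrACA -opprD psi_skew subr0. Qed.

Lemma asympt_feasible_scaled_ones (s : R -> R) :
  (forall t, 0 < s t <= 1) -> s @ +oo --> 0 ->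
  asympt_feasible f g (fun t => s t *: const_mx 1) s (fun t => s t *: const_mx 1) s.
Proof.
move=> s_bnd s0; set z : 'rV[R]_(n + m) := const_mx 1.
have s_gt0 t : 0 < s t by case/andP: (s_bnd t).
have psi1_sz t : (psi f g (s t *: z) (s t)).1 = s t *: (psi f g z 1).1.
  by rewrite -[X in psi _ _ _ X](mulr1 (s t)) psiZ ?gt_eqF.
have psi2_sz t : (psi f g (s t *: z) (s t)).2 = s t * (psi f g z 1).2.
  by rewrite -[X in psi _ _ _ X](mulr1 (s t)) psiZ ?gt_eqF.
have sz_entry t j : (s t *: z) 0 j = s t by rewrite !mxE mulr1.
split; [|split; [|split]].
- by move=> t _; split; [|split; [|split]] => // j; rewrite sz_entry.
- exists 1 => t _; have /andP[/ltW s_ge0 s_le1] := s_bnd t.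
  by split; [|split; [|split]] => [j||j|]; rewrite ?sz_entry ger0_norm.
- have -> : (fun t => s t *: z - (psi f g (s t *: z) (s t)).1) =
             (fun t => s t *: (z - (psi f g z 1).1)).
    by apply/funext => t; rewrite psi1_sz scalerBr.
  rewrite -(scale0r (z - (psi f g z 1).1)).
  by apply: cvgZ => //; exact: cvg_cst.
- have -> : (fun t => s t - (psi f g (s t *: z) (s t)).2) =
             (fun t => s t * (1 - (psi f g z 1).2)).
    by apply/funext => t; rewrite psi2_sz mulrBr mulr1.
  rewrite -(mul0r (1 - (psi f g z 1).2)).
  exact: (cvgM s0 (cvg_cst _)).
Qed.

Lemma asympt_feasible_exists :
  exists xb tau sb kappa, asympt_feasible f g xb tau sb kappa.
Proof.
pose s (t : R) : R := (1 + `|t|)^-1.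
have s_bnd t : 0 < s t <= 1.
  by rewrite invr_gt0 ltr_pwDl //= invf_le1 ?ltr_pwDl // lerDl.
by do 4!eexists; exact: (asympt_feasible_scaled_ones s_bnd (@inv1Dnorm_cvg0 R)).
Qed.

Lemma asympt_feasible_complementary xb tau sb kappa :
  asympt_feasible f g xb tau sb kappa -> asympt_complementary f g xb tau sb kappa.
Proof.
move=> feas; split => //; case: feas => _ [[M bnd] [res1 res2]].
have t_gt0 : \forall t \near +oo, 0 < t :> R := nbhs_pinfty_gt (num_real 0).
under eq_fun do rewrite (complementarity_gap_residual _ _ (sb _)).
rewrite -(addr0 0); apply: cvgD.
- apply: (dotv_bounded_cvg0 (M := M) _ res1); near=> t.
  by have /bnd[xb_bnd _] : 0 < t by near: t.
- apply: (bounded_mulr_cvg0 (M := M) _ res2); near=> t.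
  by have /bnd[_ [tau_bnd _]] : 0 < t by near: t.
Unshelve. all: end_near. Qed.

End hmcp.

Theorem lemma8 (R : realType) (n m : nat) (f : 'rV[R]_n -> R)
  (g : 'I_m -> 'rV[R]_n -> R)
  (Cf : C2 f) (Cg : forall i, C2 (g i))
  (convf : convex_on_orthant f) (convg : forall i, convex_on_orthant (g i)) :
  (exists (xb : R -> 'rV[R]_(n + m)) (tau : R -> R)
          (sb : R -> 'rV[R]_(n + m)) (kappa : R -> R),
      asympt_feasible f g xb tau sb kappa) /\
  (forall (xb : R -> 'rV[R]_(n + m)) (tau : R -> R)
          (sb : R -> 'rV[R]_(n + m)) (kappa : R -> R),
      asympt_feasible f g xb tau sb kappa ->
      asympt_complementary f g xb tau sb kappa).
Proof.
split; first exact: asympt_feasible_exists.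
exact: asympt_feasible_complementary.
Qed.
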